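(* Consider the fixed-design additive regression setting, the estimator $\hat g$ and tuning parameters described in the context, and assume the sub-Gaussian noise condition and the entropy condition hold. Let $\bar g=\sum_{j=1}^p\bar g_j\in\mathcal G$ be arbitrary. Then for any $A_0>1$, with probability at least $1-\epsilon$, $$\tfrac12\|\hat g-g^*\|_n^2+\tfrac12\|\hat g-\bar g\|_n^2+(A_0-1)R_n(\hat g-\bar g)\le \tfrac12\|\bar g-g^*\|_n^2+2A_0R_n(\bar g),$$ where $R_n(\hat g-\bar g)=\sum_j\{\rho_{nj}\|\hat g_j-\bar g_j\|_{F,j}+\lambda_{nj}\|\hat g_j-\bar g_j\|_n\}$.
   Context: Data: $(Y_i,X_i)$, $i=1,\dots,n$, with $Y_i\in\mathbb R$, $X_i\in\mathbb R^d$, $Y_i=g^*(X_i)+\varepsilon_i$, where $g^*$ is an arbitrary (not necessarily additive) function. Fixed design: $X_1,\dots,X_n$ are deterministic and probabilities refer to the noise. For $j=1,\dots,p$, $x^{(j)}$ is a fixed sub-vector of coordinates of $x$, $\mathcal G_j$ is a vector space of real functions of $x^{(j)}$ with a semi-norm $\|\cdot\|_{F,j}$, and $\mathcal G=\{g(x)=\sum_{j=1}^pg_j(x^{(j)}):g_j\in\mathcal G_j\}$; every $g\in\mathcal G$ comes with a decomposition $g=\sum_jg_j$ to which component-wise quantities refer. $\|f\|_n^2=n^{-1}\sum_if(X_i)^2$, $\|Y-g\|_n^2=n^{-1}\sum_i\{Y_i-g(X_i)\}^2$, $\langle\varepsilon,f\rangle_n=n^{-1}\sum_i\varepsilon_if(X_i)$.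 $H(u,\mathcal F,\|\cdot\|)$ is the log covering number at radius $u$. Sub-Gaussian noise condition: $\varepsilon_i$ independent, mean zero, $\max_iD_0E\exp(\varepsilon_i^2/D_0)\le D_1$. $C_1=C_1(D_0,D_1)>0$ is a constant depending only on $(D_0,D_1)$ such that for every $\delta>0$, every class $\mathcal F$ with $\sup_{\mathcal F}\|f\|_n\le\delta$ and every $\psi\ge\int_0^\delta H^{1/2}(u,\mathcal F,\|\cdot\|_n)du$, $P\{\sup_{\mathcal F}|\langle\varepsilon,f\rangle_n|/C_1>n^{-1/2}\psi+\delta\sqrt{t/n}\}\le e^{-t}$ for all $t>0$. Entropy condition: with $\mathcal G_j(\delta)=\{f\in\mathcal G_j:\|f\|_{F,j}+\|f\|_n/\delta\le1\}$, $\psi_{nj}(\delta)\ge\int_0^\delta H^{1/2}(u,\mathcal G_j(\delta),\|\cdot\|_n)du$ for $0<\delta\le1$. Tuning and estimator: $0<\epsilon<1$, $0<w_{nj}\le1$, $\gamma_{nj}=n^{-1/2}\psi_{nj}(w_{nj})/w_{nj}$, $\lambda_{nj}=C_1\{\gamma_{nj}+\sqrt{\log(p/\epsilon)/n}\}$, $\rho_{nj}=\lambda_{nj}w_{nj}$, $R_n(g)=\sum_j(\rho_{nj}\|g_j\|_{F,j}+\lambda_{nj}\|g_j\|_n)$; $\hat g=\sum_j\hat g_j$ minimizes $K_n(g)=\|Y-g\|_n^2/2+A_0R_n(g)$ over $g\in\mathcal G$ and decompositions. *)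

From HB Require Import structures.
From mathcomp Require Import all_boot all_order all_algebra.
From mathcomp Require Import all_classical all_reals all_analysis.
Set Implicit Arguments. Unset Strict Implicit. Unset Printing Implicit Defensive.
Import Order.TTheory GRing.Theory Num.Theory.
Local Open Scope classical_set_scope.
Local Open Scope ring_scope.

Section Defs.
Variable R : realType.

Definition empnorm {n : nat} {A : Type} (pts : 'I_n -> A) (f : A -> R) : R :=
  Num.sqrt (n%:R^-1 * \sum_(i < n) f (pts i) ^+ 2).

Definition empinner {n : nat} {A : Type} (pts : 'I_n -> A) (e : 'I_n -> R)
  (f : A -> R) : R := n%:R^-1 * \sum_(i < n) e i * f (pts i).

Definition has_cover {n : nat} {A : Type} (pts : 'I_n -> A) (F : set (A -> R))
  (u : R) (N : nat) : Prop :=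
  exists c : 'I_N -> (A -> R),
    forall f, F f -> exists k : 'I_N, empnorm pts (fun a => f a - c k a) <= u.

(* H^{1/2}(u, F, ||.||_n) = sqrt(log N(u, F, ||.||_n)), +oo if no finite cover *)
Definition sqrt_entropy {n : nat} {A : Type} (pts : 'I_n -> A)
  (F : set (A -> R)) (u : R) : \bar R :=
  ereal_inf [set (Num.sqrt (ln N%:R))%:E | N in has_cover pts F u].

Definition entropy_integral {n : nat} {A : Type} (pts : 'I_n -> A)
  (F : set (A -> R)) (delta : R) : \bar R :=
  (\int[lebesgue_measure]_(u in `[0%R, delta]%classic) sqrt_entropy pts F u)%E.

Definition fun_subspace {A : Type} (G : set (A -> R)) : Prop :=
  G (fun _ => 0) /\
  (forall f g, G f -> G g -> G (fun a => f a + g a)) /\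
  (forall (c : R) f, G f -> G (fun a => c * f a)).

Definition seminorm_on {A : Type} (G : set (A -> R)) (nF : (A -> R) -> R) : Prop :=
  (forall f, G f -> 0 <= nF f) /\
  (forall (c : R) f, G f -> nF (fun a => c * f a) = `|c| * nF f) /\
  (forall f g, G f -> G g -> nF (fun a => f a + g a) <= nF f + nF g).

Definition mutually_independent {d} {T : measurableType d} (P : probability T R)
  {n : nat} (X : 'I_n -> T -> R) : Prop :=
  forall B : 'I_n -> set R, (forall i, measurable (B i)) ->
    P [set w | forall i, B i (X i w)] = (\prod_(i < n) P (X i @^-1` B i))%E.

Definition subvec {d k : nat} (idx : 'I_k -> 'I_d) (x : 'rV[R]_d) : 'rV[R]_k :=
  \row_(l < k) x 0 (idx l).

End Defs.

From HB Require Import structures.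
From mathcomp Require Import all_boot all_order all_algebra.
From mathcomp Require Import all_classical all_reals all_analysis.
From mathcomp Require Import ring lra.
Set Implicit Arguments. Unset Strict Implicit.
Import Order.TTheory GRing.Theory Num.Theory.
Local Open Scope classical_set_scope.
Local Open Scope ring_scope.

(* The least-squares part of K_n is 1-strongly convex along segments and the
   penalty is convex, so comparing ghat with (1 - t) ghat + t gbar and letting
   t -> 0 gives the basic inequality
     |ghat - g*|^2/2 + |ghat - gbar|^2/2
       <= |gbar - g*|^2/2 + <eps, ghat - gbar>_n + A0 (R_n(gbar) - R_n(ghat)).
   The noise term is bounded component by component: the concentration
   inequality, applied to the entropy ball G_j(w_j) at level t = log(p/epsilon),
   bounds |<eps, f>_n| by lambda_j w_j on that ball with probability at least
   1 - epsilon/p; homogeneity extends this to |<eps, f>_n| <= rho_j |f|_F,j +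
   lambda_j |f|_n on all of G_j, and a union bound over j gives the event.
   On it <eps, ghat - gbar>_n <= R_n(ghat - gbar) <= R_n(ghat) + R_n(gbar),
   which rearranges to the claim.  The sub-Gaussian assumptions on the noise
   enter only through the constant C1 of the concentration inequality. *)

Section EmpiricalNorm.
Variable R : realType.

Lemma sumr_sqr_ge0 (I : finType) (a : I -> R) : 0 <= \sum_i a i ^+ 2.
Proof. by apply: sumr_ge0 => i _; exact: sqr_ge0. Qed.

Lemma CauchySchwarz_sum (I : finType) (a b : I -> R) :
  (\sum_i a i * b i) ^+ 2 <= (\sum_i a i ^+ 2) * (\sum_i b i ^+ 2).
Proof.
have lagrange : \sum_i \sum_j (a i * b j - a j * b i) ^+ 2 =
    2 * ((\sum_i a i ^+ 2) * (\sum_j b j ^+ 2) - (\sum_i a i * b i) ^+ 2).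
  transitivity (\sum_i \sum_j (a i ^+ 2 * b j ^+ 2 + b i ^+ 2 * a j ^+ 2
                                - (2 * (a i * b i)) * (a j * b j))).
    by apply: eq_bigr => i _; apply: eq_bigr => j _; ring.
  under eq_bigr do rewrite sumrB big_split /=.
  by rewrite sumrB big_split /= -!big_distrlr /= -mulr_sumr; ring.
have : 0 <= \sum_i \sum_j (a i * b j - a j * b i) ^+ 2.
  by apply: sumr_ge0 => i _; exact: sumr_sqr_ge0.
by rewrite lagrange pmulr_rge0 // subr_ge0.
Qed.

Lemma Minkowski_sum (I : finType) (a b : I -> R) :
  Num.sqrt (\sum_i (a i + b i) ^+ 2) <=
  Num.sqrt (\sum_i a i ^+ 2) + Num.sqrt (\sum_i b i ^+ 2).
Proof.
rewrite -(@ler_pXn2r _ 2) ?nnegrE ?addr_ge0 ?sqrtr_ge0 //.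
rewrite sqr_sqrtr ?sumr_sqr_ge0 // sqrrD !sqr_sqrtr ?sumr_sqr_ge0 //.
have -> : \sum_i (a i + b i) ^+ 2 =
    \sum_i a i ^+ 2 + \sum_i b i ^+ 2 + (\sum_i a i * b i) *+ 2.
  rewrite -mulr_natr mulr_suml -!big_split; apply: eq_bigr => i _ /=; ring.
rewrite [leRHS]addrAC lerD2l lerMn2r /=.
rewrite (le_trans (ler_norm _)) // -(@ler_pXn2r _ 2) ?nnegrE ?mulr_ge0 ?sqrtr_ge0 //.
rewrite -normrX ger0_norm ?sqr_ge0 // exprMn !sqr_sqrtr ?sumr_sqr_ge0 //.
exact: CauchySchwarz_sum.
Qed.

Variable n : nat.

Definition meansq (u : 'I_n -> R) : R := n%:R^-1 * \sum_i u i ^+ 2.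

Lemma meansq_ge0 (u : 'I_n -> R) : 0 <= meansq u.
Proof. by rewrite mulr_ge0 ?invr_ge0 ?sumr_sqr_ge0. Qed.

Lemma meansq_convex_comb (u v : 'I_n -> R) (t : R) :
  meansq (fun i => (1 - t) * u i + t * v i) =
  (1 - t) * meansq u + t * meansq v - t * (1 - t) * meansq (fun i => u i - v i).
Proof.
rewrite /meansq ![_ * (n%:R^-1 * _)]mulrCA -mulrDr -mulrBr; congr (_ * _).
rewrite !mulr_sumr -big_split -sumrB; apply: eq_bigr => i _ /=; ring.
Qed.

Lemma meansq_noise_diff (g e a b : 'I_n -> R) :
  meansq (fun i => g i + e i - a i) - meansq (fun i => g i + e i - b i) =
  meansq (fun i => a i - g i) - meansq (fun i => b i - g i)
  - 2 * (n%:R^-1 * \sum_i e i * (a i - b i)).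
Proof.
rewrite /meansq mulrCA -!mulrBr; congr (_ * _).
rewrite mulr_sumr -!sumrB; apply: eq_bigr => i _; ring.
Qed.

Variables (A : Type) (pts : 'I_n -> A).

Lemma empnorm_ge0 (f : A -> R) : 0 <= empnorm pts f.
Proof. exact: sqrtr_ge0. Qed.

Lemma empnorm_sqr (f : A -> R) : empnorm pts f ^+ 2 = meansq (fun i => f (pts i)).
Proof. by rewrite sqr_sqrtr // meansq_ge0. Qed.

Lemma empnormZ (c : R) (f : A -> R) :
  empnorm pts (fun a => c * f a) = `|c| * empnorm pts f.
Proof.
rewrite /empnorm (eq_bigr (fun i => c ^+ 2 * f (pts i) ^+ 2)) => [|i _]; last first.
  by rewrite exprMn.
by rewrite -mulr_sumr mulrCA sqrtrM ?sqr_ge0 // sqrtr_sqr.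
Qed.

Lemma empnormD (f g : A -> R) :
  empnorm pts (fun a => f a + g a) <= empnorm pts f + empnorm pts g.
Proof.
rewrite /empnorm !sqrtrM ?invr_ge0 ?sumr_sqr_ge0 // -mulrDr.
by rewrite ler_wpM2l ?sqrtr_ge0 // Minkowski_sum.
Qed.

Lemma seminorm_on_empnorm (G : set (A -> R)) : seminorm_on G (empnorm pts).
Proof.
split=> [f _|]; first exact: empnorm_ge0.
by split=> [c f _|f g _ _]; [exact: empnormZ | exact: empnormD].
Qed.

Lemma empinnerZ (e : 'I_n -> R) (k : R) (f : A -> R) :
  empinner pts e (fun a => k * f a) = k * empinner pts e f.
Proof.
rewrite /empinner mulrCA [k * _]mulr_sumr; congr (_ * _).
by apply: eq_bigr => i _; rewrite mulrCA.
Qed.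

End EmpiricalNorm.

Section Seminorm.
Variables (R : realType) (A : Type) (G : set (A -> R)).
Hypothesis G_sub : fun_subspace G.

Lemma fun_subspaceB f g : G f -> G g -> G (fun a => f a - g a).
Proof.
case: G_sub => _ [GD GZ] Gf Gg.
by under eq_fun do rewrite -mulN1r; apply: GD => //; exact: GZ.
Qed.

Lemma fun_subspace_convex f g t : G f -> G g -> G (fun a => (1 - t) * f a + t * g a).
Proof. by case: G_sub => _ [GD GZ] Gf Gg; apply: GD; exact: GZ. Qed.

Lemma homogeneous_bound_of_unit_ball (N L : (A -> R) -> R) (c : R) :
  (forall f, G f -> 0 <= N f) ->
  (forall k f, G f -> N (fun a => k * f a) = `|k| * N f) ->
  (forall k f, L (fun a => k * f a) = k * L f) ->
  (forall f, G f -> N f <= 1 -> `|L f| <= c) ->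
  forall f, G f -> `|L f| <= c * N f.
Proof.
case: G_sub => _ [_ GZ] N_ge0 NZ LZ Lbound f Gf.
have c_ge0 : 0 <= c.
  have := Lbound _ (GZ 0 f Gf); rewrite NZ // LZ !normr0 !mul0r normr0.
  by apply; rewrite ler01.
(* Rescale f into the unit ball by any s > N f, then let s decrease to N f. *)
apply/ler_addgt0Pr => e e_gt0.
have c1_gt0 : 0 < c + 1 by rewrite ltr_wpDl.
pose s := N f + e / (c + 1).
have s_gt0 : 0 < s by rewrite ltr_wpDl ?N_ge0 // divr_gt0.
have := Lbound _ (GZ s^-1 f Gf).
rewrite NZ // LZ normrM ger0_norm ?invr_ge0 ?(ltW s_gt0) // !ler_pdivrMl // mulr1.
have /[swap]/[apply] : N f <= s by rewrite lerDl divr_ge0 // ltW.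
have : e / (c + 1) * c <= e by rewrite mulrAC ler_pdivrMr // ler_pM2l // lerDl.
rewrite /s; nra.
Qed.

Variable N : (A -> R) -> R.
Hypothesis N_semi : seminorm_on G N.

Lemma seminormB f g : G f -> G g -> N (fun a => f a - g a) <= N f + N g.
Proof.
case: G_sub N_semi => _ [_ GZ] [_ [NZ ND]] Gf Gg.
under eq_fun do rewrite -mulN1r.
by rewrite (le_trans (ND _ _ Gf (GZ _ _ Gg))) // NZ // normrN normr1 mul1r.
Qed.

Lemma seminorm_convex f g t : G f -> G g -> 0 <= t <= 1 ->
  N (fun a => (1 - t) * f a + t * g a) <= (1 - t) * N f + t * N g.
Proof.
case: G_sub N_semi => _ [_ GZ] [_ [NZ ND]] Gf Gg /andP[t_ge0 t_le1].
rewrite (le_trans (ND _ _ (GZ _ _ Gf) (GZ _ _ Gg))) // !NZ //.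
by rewrite !ger0_norm ?subr_ge0.
Qed.

End Seminorm.

Lemma ler_of_forall_le_add_scaled (R : realFieldType) (x y D : R) :
  0 <= D -> (forall t, 0 < t <= 1 -> x <= y + t * D) -> x <= y.
Proof.
move=> D_ge0 le_xy; apply/ler_addgt0Pr => e e_gt0.
pose t := e / (e + D).
have tE : t * (e + D) = e by rewrite mulfVK // gt_eqF // ltr_pwDl.
have t_gt0 : 0 < t by rewrite divr_gt0 // ltr_pwDl.
have t_le1 : t <= 1 by nra.
have /le_xy : 0 < t <= 1 by rewrite t_gt0 t_le1.
nra.
Qed.

Lemma sqr_loss_min_gap (R : realType) (n : nat) (y a b : 'I_n -> R) (ra rb : R) :
  (forall t, 0 < t <= 1 ->
     meansq (fun i => y i - a i) / 2 + ra <=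
     meansq (fun i => y i - ((1 - t) * a i + t * b i)) / 2 + ((1 - t) * ra + t * rb)) ->
  meansq (fun i => y i - a i) / 2 + meansq (fun i => a i - b i) / 2 + ra <=
  meansq (fun i => y i - b i) / 2 + rb.
Proof.
move=> le_segment.
apply: (@ler_of_forall_le_add_scaled _ _ _ (meansq (fun i => a i - b i) / 2)).
  by rewrite divr_ge0 ?meansq_ge0.
move=> t /[dup] /andP[t_gt0 _] /le_segment.
have -> : (fun i => y i - ((1 - t) * a i + t * b i)) =
          (fun i => (1 - t) * (y i - a i) + t * (y i - b i)).
  by apply: funext => i; ring.
rewrite meansq_convex_comb.
have -> : meansq (fun i => (y i - a i) - (y i - b i)) = meansq (fun i => a i - b i).
  rewrite /meansq; congr (_ * _); apply: eq_bigr => i _.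
  by rewrite -sqrrN; congr (_ ^+ 2); ring.
move=> le_t; rewrite -subr_ge0 -(pmulr_rge0 _ t_gt0); lra.
Qed.

Section Entropy.
Variables (R : realType) (n : nat).

Lemma sqrt_entropy_ge0 (A : Type) (pts : 'I_n -> A) (F : set (A -> R)) (u : R) :
  (0 <= sqrt_entropy pts F u)%E.
Proof. by apply/ereal_infP => _ [N _ <-]; rewrite lee_fin sqrtr_ge0. Qed.

Lemma entropy_integral_ge0 (A : Type) (pts : 'I_n -> A) (F : set (A -> R)) delta :
  (0 <= entropy_integral pts F delta)%E.
Proof. by apply: integral_ge0 => u _; exact: sqrt_entropy_ge0. Qed.

Lemma le_entropy_integral (A B : Type) (ptsA : 'I_n -> A) (ptsB : 'I_n -> B)
    (FA : set (A -> R)) (FB : set (B -> R)) delta :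
  (forall u N, has_cover ptsB FB u N -> has_cover ptsA FA u N) ->
  (entropy_integral ptsA FA delta <= entropy_integral ptsB FB delta)%E.
Proof.
move=> cover_transfer.
have le_sqrt_entropy u : (sqrt_entropy ptsA FA u <= sqrt_entropy ptsB FB u)%E.
  by apply: ereal_inf_le_tmp => _ [N /cover_transfer HN <-]; exists N.
rewrite /entropy_integral !ge0_integralE => [|u _|u _]; try exact: sqrt_entropy_ge0.
apply: ereal_sup_le => _ [h h_le <-]; exists h => //= u.
by apply: le_trans (h_le u) _; rewrite /patch; case: ifP => // _; exact: le_sqrt_entropy.
Qed.

Lemma entropy_integral_comp (A B : Type) (pts : 'I_n -> A) (pi : A -> B)
    (F : set (B -> R)) delta :
  (entropy_integral pts [set fun x => f (pi x) | f in F] delta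
    <= entropy_integral (fun i => pi (pts i)) F delta)%E.
Proof.
apply: le_entropy_integral => u N [c c_cover].
by exists (fun k x => c k (pi x)) => _ [f /c_cover + <-].
Qed.

End Entropy.

Lemma le_probability_bigsetI (R : realType) (d : measure_display)
    (T : measurableType d) (P : probability T R) (I : finType)
    (E : I -> set T) (delta : R) :
  (forall i, measurable (E i)) -> (forall i, ((1 - delta)%:E <= P (E i))%E) ->
  ((1 - #|I|%:R * delta)%:E <= P (\big[setI/setT]_i E i))%E.
Proof.
move=> mE PE.
have mEC i : measurable (~` E i) := measurableC (mE i).
have [mU boole] : measurable (\big[setU/set0]_i ~` E i) /\
    (P (\big[setU/set0]_i ~` E i) <= \sum_i P (~` E i))%E.
  apply: (big_ind2 (fun U s => measurable U /\ (P U <= s)%E)) => //.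
    by rewrite measure0.
  move=> U1 s1 U2 s2 [mU1 le1] [mU2 le2]; split; first exact: measurableU.
  by rewrite (le_trans (measureU2 _ _ _)) // leeD.
have -> : \big[setI/setT]_i E i = ~` \big[setU/set0]_i ~` E i.
  by rewrite setC_bigsetU; apply: eq_bigr => i _; rewrite setCK.
rewrite probability_setC //.
have PEC i : (P (~` E i) <= delta%:E)%E.
  move: (PE i); rewrite probability_setC // -(fineK (fin_num_measure P _ (mE i))).
  by rewrite !lee_fin; lra.
have := le_trans boole (lee_sum _ (fun i _ => PEC i)).
rewrite sumEFin sumr_const -mulr_natl -(fineK (fin_num_measure P _ mU)) !lee_fin.
lra.
Qed.

Section AdditiveModel.
Variables (R : realType) (n p : nat) (A : Type) (X : 'I_n -> A).
Variables (B : 'I_p -> Type) (pi : forall j, A -> B j).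
(* Otherwise [j], being inferable from the function argument, would become
   implicit in [G j f] and [nF j f]. *)
Local Unset Implicit Arguments.
Variables (G : forall j, set (B j -> R)) (nF : forall j, (B j -> R) -> R).
Local Set Implicit Arguments.
Hypotheses (G_sub : forall j, fun_subspace (G j))
           (nF_semi : forall j, seminorm_on (G j) (nF j)).
Variables (rho lambda : 'I_p -> R).
Hypotheses (rho_ge0 : forall j, 0 <= rho j) (lambda_ge0 : forall j, 0 <= lambda j).

Definition additive_fun (g : forall j, B j -> R) (x : A) : R := \sum_j g j (pi j x).

Definition decomposed (g : forall j, B j -> R) : Prop := forall j, G j (g j).

Definition penalty (g : forall j, B j -> R) : R :=
  \sum_j (rho j * nF j (g j) + lambda j * empnorm (fun i => pi j (X i)) (g j)).

Lemma penaltyB g h : decomposed g -> decomposed h ->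
  penalty (fun j z => g j z - h j z) <= penalty g + penalty h.
Proof.
move=> Gg Gh; rewrite /penalty -big_split /=; apply: ler_sum => j _.
have := seminormB (G_sub j) (nF_semi j) (Gg j) (Gh j).
have := seminormB (G_sub j) (seminorm_on_empnorm (fun i => pi j (X i)) _) (Gg j) (Gh j).
move=> le_norm le_nF.
have := ler_wpM2l (rho_ge0 j) le_nF; have := ler_wpM2l (lambda_ge0 j) le_norm.
lra.
Qed.

Lemma penalty_convex g h t : decomposed g -> decomposed h -> 0 <= t <= 1 ->
  penalty (fun j z => (1 - t) * g j z + t * h j z) <=
  (1 - t) * penalty g + t * penalty h.
Proof.
move=> Gg Gh t01; rewrite /penalty !mulr_sumr -big_split /=; apply: ler_sum => j _.
have := seminorm_convex (G_sub j) (nF_semi j) (Gg j) (Gh j) t01.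
have := seminorm_convex (G_sub j) (seminorm_on_empnorm (fun i => pi j (X i)) _)
  (Gg j) (Gh j) t01.
move=> le_norm le_nF.
have := ler_wpM2l (rho_ge0 j) le_nF; have := ler_wpM2l (lambda_ge0 j) le_norm.
lra.
Qed.

Variable e : 'I_n -> R.
Hypothesis noise_bound : forall j f, G j f ->
  `|empinner X e (fun x => f (pi j x))| <=
  rho j * nF j f + lambda j * empnorm (fun i => pi j (X i)) f.

Lemma empinner_additive_le_penalty g : decomposed g ->
  empinner X e (additive_fun g) <= penalty g.
Proof.
move=> Gg; have -> : empinner X e (additive_fun g) =
    \sum_j empinner X e (fun x => g j (pi j x)).
  rewrite /empinner -mulr_sumr exchange_big /=; congr (_ * _).
  by apply: eq_bigr => i _; rewrite mulr_sumr.
by apply: ler_sum => j _; exact: le_trans (ler_norm _) (noise_bound (Gg j)).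
Qed.

Variables (gstar : A -> R) (y : 'I_n -> R) (A0 : R).
Hypotheses (y_def : forall i, y i = gstar (X i) + e i) (A0_ge0 : 0 <= A0).

Definition objective (g : forall j, B j -> R) : R :=
  meansq (fun i => y i - additive_fun g (X i)) / 2 + A0 * penalty g.

Theorem oracle_inequality_on_noise_event ghat gbar :
  decomposed ghat -> decomposed gbar ->
  (forall g, decomposed g -> objective ghat <= objective g) ->
  empnorm X (fun x => additive_fun ghat x - gstar x) ^+ 2 / 2
  + empnorm X (fun x => additive_fun ghat x - additive_fun gbar x) ^+ 2 / 2
  + (A0 - 1) * penalty (fun j z => ghat j z - gbar j z)
  <= empnorm X (fun x => additive_fun gbar x - gstar x) ^+ 2 / 2
     + 2 * A0 * penalty gbar.
Proof.
move=> Gghat Ggbar ghat_opt.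
pose a i := additive_fun ghat (X i); pose b i := additive_fun gbar (X i).
have basic : meansq (fun i => y i - a i) / 2 + meansq (fun i => a i - b i) / 2
             + A0 * penalty ghat <= meansq (fun i => y i - b i) / 2 + A0 * penalty gbar.
  apply: sqr_loss_min_gap => t /andP[t_gt0 t_le1].
  have t01 : 0 <= t <= 1 by rewrite ltW.
  pose gt j z := (1 - t) * ghat j z + t * gbar j z.
  have Ggt : decomposed gt := fun j => fun_subspace_convex (G_sub j) t (Gghat j) (Ggbar j).
  have gtE i : additive_fun gt (X i) = (1 - t) * a i + t * b i.
    by rewrite /additive_fun big_split /= -!mulr_sumr.
  apply: (le_trans (ghat_opt _ Ggt)); rewrite /objective.
  under eq_fun do rewrite gtE.
  rewrite lerD2l ![_ * (A0 * _)]mulrCA -mulrDr ler_wpM2l //.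
  exact: penalty_convex.
have noise_diff : meansq (fun i => y i - a i) - meansq (fun i => y i - b i) =
    meansq (fun i => a i - gstar (X i)) - meansq (fun i => b i - gstar (X i))
    - 2 * empinner X e (fun x => additive_fun ghat x - additive_fun gbar x).
  by rewrite (funext y_def); exact: meansq_noise_diff.
have inner : empinner X e (fun x => additive_fun ghat x - additive_fun gbar x)
             <= penalty (fun j z => ghat j z - gbar j z).
  have -> : (fun x => additive_fun ghat x - additive_fun gbar x) =
            additive_fun (fun j z => ghat j z - gbar j z).
    by apply: funext => x; rewrite /additive_fun sumrB.
  apply: empinner_additive_le_penalty => j.
  exact: (fun_subspaceB (G_sub j) (Gghat j) (Ggbar j)).
have := ler_wpM2l A0_ge0 (penaltyB Gghat Ggbar).
rewrite !empnorm_sqr.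
move: basic noise_diff inner; rewrite {}/a {}/b; lra.
Qed.
End AdditiveModel.

Section NoiseEvent.
Variables (R : realType) (dT : measure_display) (T : measurableType dT).
Variables (P : probability T R) (n : nat) (A : Type) (X : 'I_n -> A).
Variables (eps : 'I_n -> T -> R) (C1 : R).
Hypothesis C1_gt0 : 0 < C1.
Hypothesis C1_prop : forall (delta : R), 0 < delta ->
  forall F : set (A -> R), (forall f, F f -> empnorm X f <= delta) ->
  forall psi : R, (entropy_integral X F delta <= psi%:E)%E ->
  forall t : R, 0 < t ->
  exists E : set T, measurable E /\ ((1 - expR (- t))%:E <= P E)%E /\
    forall om, E om -> forall f, F f ->
      `|empinner X (fun i => eps i om) f| / C1
        <= (Num.sqrt n%:R)^-1 * psi + delta * Num.sqrt (t / n%:R).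

Lemma component_noise_bound (B : Type) (pi : A -> B) (G : set (B -> R))
    (nF : (B -> R) -> R) (delta psi t : R) :
  fun_subspace G -> seminorm_on G nF -> 0 < delta -> 0 < t ->
  (entropy_integral (fun i => pi (X i))
     [set f | G f /\ (nF f + empnorm (fun i => pi (X i)) f / delta <= 1)%R] delta
   <= psi%:E)%E ->
  exists E : set T, measurable E /\ ((1 - expR (- t))%:E <= P E)%E /\
    forall om, E om -> forall f, G f ->
      `|empinner X (fun i => eps i om) (fun x => f (pi x))| <=
      C1 * ((Num.sqrt n%:R)^-1 * psi / delta + Num.sqrt (t / n%:R))
         * (delta * nF f + empnorm (fun i => pi (X i)) f).
Proof.
move=> G_sub nF_semi delta_gt0 t_gt0 entropy_le.
set ball := [set f | G f /\ nF f + empnorm (fun i => pi (X i)) f / delta <= 1].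
have ball_le f : ball f -> empnorm (fun i => pi (X i)) f <= delta.
  case=> Gf le1; have nF_ge0 := nF_semi.1 f Gf.
  have : empnorm (fun i => pi (X i)) f / delta <= 1 by lra.
  by rewrite ler_pdivrMr // mul1r.
have image_le h : [set fun x => f (pi x) | f in ball] h -> empnorm X h <= delta.
  by case=> f /ball_le + <-.
have [E [mE [PE E_bound]]] := C1_prop delta_gt0 image_le
  (le_trans (entropy_integral_comp _ _ _ _) entropy_le) t_gt0.
exists E; split=> //; split=> // om Eom f Gf.
have unit_bound g : G g -> nF g + empnorm (fun i => pi (X i)) g / delta <= 1 ->
    `|empinner X (eps^~ om) (fun x => g (pi x))| <=
    C1 * ((Num.sqrt n%:R)^-1 * psi + delta * Num.sqrt (t / n%:R)).
  by move=> Gg le1; rewrite -ler_pdivrMl // mulrC; apply: E_bound; last exists g.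
have [nF_ge0 [nFZ _]] := nF_semi.
have rescale (a r u v : R) :
    C1 * (a / delta + r) * (delta * u + v) = C1 * (a + delta * r) * (u + v / delta).
  by field; rewrite gt_eqF.
rewrite rescale.
apply: (homogeneous_bound_of_unit_ball G_sub _ _ _ unit_bound Gf) => [g Gg|k g Gg|k g].
- by rewrite addr_ge0 ?nF_ge0 // divr_ge0 ?empnorm_ge0 // ltW.
- by rewrite nFZ // empnormZ mulrDr mulrA.
- exact: empinnerZ.
Qed.

Lemma noise_event (p : nat) (B : 'I_p -> Type) (pi : forall j, A -> B j)
    (G : forall j, set (B j -> R)) (nF : forall j, (B j -> R) -> R)
    (psi w : 'I_p -> R) (epsilon : R) :
  (0 < p)%N -> 0 < epsilon < 1 ->
  (forall j, fun_subspace (G j)) -> (forall j, seminorm_on (G j) (nF j)) ->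
  (forall j, 0 < w j) ->
  (forall j, (entropy_integral (fun i => pi j (X i))
     [set f | G j f /\ (nF j f + empnorm (fun i => pi j (X i)) f / w j <= 1)%R]
     (w j) <= (psi j)%:E)%E) ->
  let lambda j :=
    C1 * ((Num.sqrt n%:R)^-1 * psi j / w j + Num.sqrt (ln (p%:R / epsilon) / n%:R)) in
  exists E : set T, measurable E /\ ((1 - epsilon)%:E <= P E)%E /\
    forall om, E om -> forall j f, G j f ->
      `|empinner X (fun i => eps i om) (fun x => f (pi j x))| <=
      lambda j * w j * nF j f + lambda j * empnorm (fun i => pi j (X i)) f.
Proof.
move=> p_gt0 /andP[eps_gt0 eps_lt1] G_sub nF_semi w_gt0 entropy_le lambda.
have p_gt0R : 0 < p%:R :> R by rewrite ltr0n.
have p_eps_gt1 : 1 < p%:R / epsilon.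
  by rewrite ltr_pdivlMr // mul1r (lt_le_trans eps_lt1) // ler1n.
have t_gt0 : 0 < ln (p%:R / epsilon) by rewrite ln_gt0.
have expRt : expR (- ln (p%:R / epsilon)) = epsilon / p%:R.
  by rewrite expRN lnK ?posrE ?divr_gt0 // invf_div.
have /choice[E HE] : forall j, exists E : set T, measurable E /\
    ((1 - epsilon / p%:R)%:E <= P E)%E /\
    forall om, E om -> forall f, G j f ->
      `|empinner X (fun i => eps i om) (fun x => f (pi j x))| <=
      lambda j * w j * nF j f + lambda j * empnorm (fun i => pi j (X i)) f.
  move=> j.
  have [E [mE [PE E_bound]]] := component_noise_bound (G_sub j) (nF_semi j)
    (w_gt0 j) t_gt0 (entropy_le j).
  exists E; rewrite -expRt; split=> //; split=> // om Eom f Gf.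
  by rewrite -mulrA -mulrDr; exact: E_bound.
exists (\big[setI/setT]_j E j); split.
  by apply: bigsetI_measurable => j _; exact: (HE j).1.
split.
  have := le_probability_bigsetI (fun j => (HE j).1) (fun j => (HE j).2.1).
  by rewrite card_ord mulrC divfK // gt_eqF.
move=> om Eom j; apply: (HE j).2.2.
by move: Eom; rewrite (bigD1 j) //= => -[].
Qed.

End NoiseEvent.

Theorem corollary1
  (R : realType) (dT : measure_display) (T : measurableType dT)
  (P : probability T R)
  (n d p : nat) (n_gt0 : (0 < n)%N) (p_gt0 : (0 < p)%N)
  (* fixed design and regression function *)
  (X : 'I_n -> 'rV[R]_d) (gstar : 'rV[R]_d -> R)
  (* noise and responses Y_i = g*(X_i) + eps_i *)
  (eps : 'I_n -> T -> R) (Y : 'I_n -> T -> R)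
  (eps_meas : forall i, measurable_fun setT (eps i))
  (Y_def : forall i w, Y i w = gstar (X i) + eps i w)
  (* additive structure: x^(j) = sub-vector of coordinates idx j *)
  (dj : 'I_p -> nat) (idx : forall j : 'I_p, 'I_(dj j) -> 'I_d)
  (idx_inj : forall j, injective (idx j))
  (G : forall j : 'I_p, set ('rV[R]_(dj j) -> R))
  (nF : forall j : 'I_p, ('rV[R]_(dj j) -> R) -> R)
  (G_sub : forall j, fun_subspace (G j))
  (nF_semi : forall j, seminorm_on (G j) (nF j))
  (* sub-Gaussian noise condition *)
  (D0 D1 : R) (D0_gt0 : 0 < D0) (D1_gt0 : 0 < D1)
  (eps_indep : mutually_independent P eps)
  (eps_mean0 : forall i, 'E_P[eps i]%E = 0%E)
  (eps_subG : forall i,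
     (D0%:E * 'E_P[fun w => expR (eps i w ^+ 2 / D0)] <= D1%:E)%E)
  (* the constant C1 of the concentration inequality *)
  (C1 : R) (C1_gt0 : 0 < C1)
  (C1_prop : forall (delta : R), 0 < delta ->
     forall F : set ('rV[R]_d -> R),
     (forall f, F f -> empnorm X f <= delta) ->
     forall psi : R, (entropy_integral X F delta <= psi%:E)%E ->
     forall t : R, 0 < t ->
     exists E : set T, measurable E /\
       ((1 - expR (- t))%:E <= P E)%E /\
       forall w, E w -> forall f, F f ->
         `|empinner X (fun i => eps i w) f| / C1
           <= (Num.sqrt n%:R)^-1 * psi + delta * Num.sqrt (t / n%:R))
  (* entropy condition *)
  (psi : 'I_p -> R -> R)
  (entropy_cond : forall j (delta : R), 0 < delta <= 1 ->
     (entropy_integral (fun i => subvec (idx j) (X i))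
        [set f | G j f /\ (nF j f + empnorm (fun i => subvec (idx j) (X i)) f / delta <= 1)%R]
        delta <= (psi j delta)%:E)%E)
  (* tuning parameters *)
  (epsilon : R) (eps_pos : 0 < epsilon < 1)
  (w : 'I_p -> R) (w_pos : forall j, 0 < w j <= 1) :
  let normj (j : 'I_p) (f : 'rV[R]_(dj j) -> R) :=
    empnorm (fun i => subvec (idx j) (X i)) f in
  let gamma (j : 'I_p) := (Num.sqrt n%:R)^-1 * psi j (w j) / w j in
  let lambda (j : 'I_p) :=
    C1 * (gamma j + Num.sqrt (ln (p%:R / epsilon) / n%:R)) in
  let rho (j : 'I_p) := lambda j * w j in
  (* decompositions g = sum_j g_j with g_j in G_j *)
  let decomp := fun gc : (forall j : 'I_p, 'rV[R]_(dj j) -> R) =>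
    forall j, G j (gc j) in
  let eval := fun (gc : forall j : 'I_p, 'rV[R]_(dj j) -> R) (x : 'rV[R]_d) =>
    \sum_(j < p) gc j (subvec (idx j) x) in
  let Rn := fun gc : (forall j : 'I_p, 'rV[R]_(dj j) -> R) =>
    \sum_(j < p) (rho j * nF j (gc j) + lambda j * normj j (gc j)) in
  let Kn := fun (A0 : R) (om : T) (gc : forall j : 'I_p, 'rV[R]_(dj j) -> R) =>
    (n%:R^-1 * \sum_(i < n) (Y i om - eval gc (X i)) ^+ 2) / 2 + A0 * Rn gc in
  forall gbar : (forall j : 'I_p, 'rV[R]_(dj j) -> R), decomp gbar ->
  forall A0 : R, 1 < A0 ->
  exists E : set T, measurable E /\ ((1 - epsilon)%:E <= P E)%E /\
    forall om, E om ->
    forall ghat : (forall j : 'I_p, 'rV[R]_(dj j) -> R),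
      decomp ghat ->
      (forall gc, decomp gc -> Kn A0 om ghat <= Kn A0 om gc) ->
      (empnorm X (fun x => eval ghat x - gstar x)) ^+ 2 / 2
      + (empnorm X (fun x => eval ghat x - eval gbar x)) ^+ 2 / 2
      + (A0 - 1) * Rn (fun j z => ghat j z - gbar j z)
      <= (empnorm X (fun x => eval gbar x - gstar x)) ^+ 2 / 2
         + 2 * A0 * Rn gbar.
Proof.
move=> normj gamma lambda rho decomp eval Rn Kn gbar gbar_dec A0 A0_gt1.
have w_gt0 j : 0 < w j by case/andP: (w_pos j).
have psi_ge0 j : 0 <= psi j (w j).
  rewrite -lee_fin.
  exact: le_trans (entropy_integral_ge0 _ _ _) (entropy_cond _ _ (w_pos j)).
have lambda_ge0 j : 0 <= lambda j.
  by rewrite mulr_ge0 ?addr_ge0 ?sqrtr_ge0 ?divr_ge0 ?mulr_ge0 ?invr_ge0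
             ?sqrtr_ge0 ?(ltW C1_gt0) ?(ltW (w_gt0 j)).
have rho_ge0 j : 0 <= rho j by rewrite mulr_ge0 // ltW.
have [E [mE [PE E_bound]]] := noise_event (pi := fun j => subvec (idx j))
  (psi := fun j => psi j (w j)) C1_gt0 C1_prop p_gt0 eps_pos G_sub nF_semi w_gt0
  (fun j => entropy_cond _ _ (w_pos j)).
exists E; split=> //; split=> // om Eom ghat ghat_dec ghat_opt.
apply: (oracle_inequality_on_noise_event G_sub nF_semi rho_ge0 lambda_ge0
  (E_bound om Eom) (fun i => Y_def i om) (ltW (lt_trans ltr01 A0_gt1))) => //.
Qed.
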